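(* Let $\xi$ be a model with $\xi(1)=1$ which is not of the form $\xi(t)=at^2$. Then $\xi$ has non-negative replicon eigenvalue and is pure-like or critical if and only if $$\frac{\xi''(1)}{\xi'(1)}\le y_\xi\le\frac{\xi'(1)}{\xi''(0)}.$$
   Context: A model is $\xi(t)=\sum_{p\ge2}\beta_p^2t^p$, real $\beta_p$ not all zero, with $\xi(1+\epsilon)<\infty$ for some $\epsilon>0$. For $\xi$ not of the form $at^2$, $y_\xi$ is the unique $y\in(1,\infty)$ with $\frac{\xi(1)}{\xi'(1)}=\frac1{y-1}\big(\frac{y}{y-1}\log y-1\big)$; the convention $\xi'(1)/0=+\infty$ is used if $\xi''(0)=0$. The system $\xi(1)=\frac1m(\frac1m\log\frac{c+m}c-\frac1{c+m})$, $\frac1{\xi'(1)}=c(c+m)$ has a unique solution $m,c>0$; with $\phi(t)=m(1-t)+c$ and formal conjugate $\eta(t)=\xi(1)-\int_t^1\int_0^s\phi^{-2}d\tau ds$, the replicon eigenvalue is $\eta''(0)-\xi''(0)$. With $\nu'=\xi'(1),\nu''=\xi''(1)$, $ABA=\log(\nu''/\nu')-\frac{(\nu''-\nu')(\nu''-\nu'+\nu'^2)}{\nu''\nu'^2}$; pure-like means $ABA>0$, critical means $ABA=0$. *)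

From Stdlib Require Import Reals Lra.
From Coquelicot Require Import Coquelicot.
Open Scope R_scope.

(* A model xi(t) = sum_{p>=2} beta_p^2 t^p is described by the sequence
   beta : nat -> R; the entries beta 0, beta 1 are ignored. *)
Definition coef (beta : nat -> R) (p : nat) : R :=
  if Nat.ltb p 2 then 0 else beta p ^ 2.

Definition xi (beta : nat -> R) (t : R) : R := PSeries (coef beta) t.

Definition is_model (beta : nat -> R) : Prop :=
  (exists p : nat, (2 <= p)%nat /\ beta p <> 0) /\
  (exists eps : R, 0 < eps /\ ex_pseries (coef beta) (1 + eps)).

Definition is_pure_quadratic (beta : nat -> R) : Prop :=
  exists a : R, forall t : R, -1 <= t <= 1 -> xi beta t = a * t ^ 2.

Definition xi' (beta : nat -> R) (t : R) : R := Derive (xi beta) t.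
Definition xi'' (beta : nat -> R) (t : R) : R := Derive_n (xi beta) 2 t.

(* the defining equation of y_xi (y_xi is its unique solution in (1,oo)) *)
Definition is_y_xi (beta : nat -> R) (y : R) : Prop :=
  1 < y /\
  xi beta 1 / xi' beta 1 = / (y - 1) * (y / (y - 1) * ln y - 1).

Definition is_mc (beta : nat -> R) (m c : R) : Prop :=
  0 < m /\ 0 < c /\
  xi beta 1 = / m * (/ m * ln ((c + m) / c) - / (c + m)) /\
  / xi' beta 1 = c * (c + m).

Definition phi (m c t : R) : R := m * (1 - t) + c.

Definition eta (beta : nat -> R) (m c t : R) : R :=
  xi beta 1 - RInt (fun s => RInt (fun tau => / (phi m c tau) ^ 2) 0 s) t 1.

Definition replicon (beta : nat -> R) (m c : R) : R :=
  Derive_n (eta beta m c) 2 0 - xi'' beta 0.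

Definition ABA (nu1 nu2 : R) : R :=
  ln (nu2 / nu1) - (nu2 - nu1) * (nu2 - nu1 + nu1 ^ 2) / (nu2 * nu1 ^ 2).

Definition pure_like (beta : nat -> R) : Prop := ABA (xi' beta 1) (xi'' beta 1) > 0.
Definition critical (beta : nat -> R) : Prop := ABA (xi' beta 1) (xi'' beta 1) = 0.

From Stdlib Require Import Reals Lra Lia.
From Coquelicot Require Import Coquelicot.
Open Scope R_scope.

(* Write v = ξ'(1) and v₂ = ξ''(1).  With ξ(1) = 1 the equation for y_ξ reads
   1/v = G(y), where G decreases from 1/2 to 0 on (1,∞); hence v > 2, and the
   system for (m, c) gives G((c+m)/c) = c(c+m) = 1/v, i.e. y = (c+m)/c.
   Since η'' = φ⁻², the replicon eigenvalue is (m+c)⁻² − ξ''(0), which is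
   non-negative exactly when ξ''(0) = 0 or y ≤ v/ξ''(0).  Finally
   ABA(v, v₂) = h(v₂/v) with h(r) = ln r − (r−1)(r−1+v)/(rv); h vanishes at 1 and
   at y, decreases on (0,1], increases on [1,v−1] and decreases afterwards, so
   h(r) ≥ 0 exactly when r ≤ y. *)

Lemma MVT_interior (f df : R -> R) (a b : R) : a < b ->
  (forall x, a <= x <= b -> is_derive f x (df x)) ->
  exists c, a < c < b /\ f b - f a = df c * (b - a).
Proof.
  intros Hab Hd.
  destruct (MVT_cor2 f df a b Hab) as [c [E Hc]].
  - intros x Hx. apply is_derive_Reals, Hd; lra.
  - exists c. split; assumption.
Qed.

Lemma increasing_of_derive_pos (f df : R -> R) (a b : R) : a < b ->
  (forall x, a <= x <= b -> is_derive f x (df x)) ->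
  (forall x, a < x < b -> 0 < df x) -> f a < f b.
Proof.
  intros Hab Hd Hpos.
  destruct (MVT_interior f df a b Hab Hd) as [c [Hc E]].
  assert (0 < df c * (b - a)) by (apply Rmult_lt_0_compat; [apply Hpos |]; lra).
  lra.
Qed.

Lemma decreasing_of_derive_neg (f df : R -> R) (a b : R) : a < b ->
  (forall x, a <= x <= b -> is_derive f x (df x)) ->
  (forall x, a < x < b -> df x < 0) -> f b < f a.
Proof.
  intros Hab Hd Hneg.
  enough (- f a < - f b) by lra.
  apply (increasing_of_derive_pos (fun x => - f x) (fun x => - df x)); [assumption | |].
  - intros x Hx. apply (is_derive_opp f), Hd, Hx.
  - intros x Hx. specialize (Hneg x Hx). lra.
Qed.

Lemma ln_lt_sub_1 (x : R) : 0 < x -> x <> 1 -> ln x < x - 1.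
Proof.
  intros Hx Hx1.
  pose proof (exp_ineq1 (ln x) (ln_neq_0 x Hx1 Hx)) as H.
  rewrite exp_ln in H by assumption. lra.
Qed.

Lemma one_sub_inv_lt_ln (x : R) : 1 < x -> 1 - / x < ln x.
Proof.
  intros Hx.
  assert (Hinv : 0 < / x < 1).
  { split; [apply Rinv_0_lt_compat; lra |].
    rewrite <- Rinv_1. apply Rinv_lt_contravar; lra. }
  pose proof (ln_lt_sub_1 (/ x) ltac:(lra) ltac:(lra)) as H.
  rewrite ln_Rinv in H by lra. lra.
Qed.

Definition G (y : R) : R := / (y - 1) * (y / (y - 1) * ln y - 1).

Lemma G_eq (y : R) : 1 < y -> G y = (y * ln y - y + 1) / (y - 1) ^ 2.
Proof. intros Hy. unfold G. field. lra. Qed.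

Lemma G_pos (y : R) : 1 < y -> 0 < G y.
Proof.
  intros Hy. rewrite G_eq by assumption.
  apply Rdiv_lt_0_compat; [| apply pow_lt; lra].
  pose proof (one_sub_inv_lt_ln y Hy) as H.
  apply (Rmult_lt_compat_l y) in H; [| lra].
  replace (y * (1 - / y)) with (y - 1) in H by (field; lra). lra.
Qed.

Lemma G_lt_half (y : R) : 1 < y -> G y < / 2.
Proof.
  intros Hy. rewrite G_eq by assumption.
  set (q := fun x => (x - 1) ^ 2 / 2 - x * ln x + x - 1).
  assert (Hq : q 1 < q y).
  { apply (increasing_of_derive_pos q (fun x => x - 1 - ln x)); [assumption | |].
    - intros x Hx. unfold q. auto_derive; [lra |]. field. lra.
    - intros x Hx. pose proof (ln_lt_sub_1 x ltac:(lra) ltac:(lra)). lra. }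
  unfold q in Hq. rewrite ln_1 in Hq.
  apply (Rmult_lt_reg_r ((y - 1) ^ 2)); [apply pow_lt; lra |].
  unfold Rdiv. rewrite Rmult_assoc, Rinv_l by (apply pow_nonzero; lra). lra.
Qed.

Lemma G_decreasing (a b : R) : 1 < a -> a < b -> G b < G a.
Proof.
  intros Ha Hab.
  set (k := fun x => 2 * (x - 1) - (x + 1) * ln x).
  assert (Hk : forall x, 1 < x -> k x < 0).
  { intros x Hx. replace 0 with (k 1) by (unfold k; rewrite ln_1; ring).
    apply (decreasing_of_derive_neg k (fun x => 1 - ln x - / x)); [assumption | |].
    - intros z Hz. unfold k. auto_derive; [lra |]. field. lra.
    - intros z Hz. pose proof (one_sub_inv_lt_ln z ltac:(lra)). lra. }
  apply (decreasing_of_derive_neg G (fun x => k x / (x - 1) ^ 3)); [assumption | |].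
  - intros x Hx. unfold G, k. auto_derive; [repeat split; try (intro; lra); lra |]. field. lra.
  - intros x Hx. unfold Rdiv.
    apply Rmult_neg_pos; [apply Hk; lra | apply Rinv_0_lt_compat, pow_lt; lra].
Qed.

Lemma G_inj (a b : R) : 1 < a -> 1 < b -> G a = G b -> a = b.
Proof.
  intros Ha Hb E. destruct (Rtotal_order a b) as [H | [H | H]]; [| assumption |].
  - pose proof (G_decreasing a b Ha H). lra.
  - pose proof (G_decreasing b a Hb H). lra.
Qed.

Lemma G_mc (m c : R) : 0 < m -> 0 < c ->
  1 = / m * (/ m * ln ((c + m) / c) - / (c + m)) -> G ((c + m) / c) = c * (c + m).
Proof.
  intros Hm Hc Hmc.
  assert (HL : ln ((c + m) / c) = m * m + m / (c + m)).
  { rewrite <- (Rmult_1_r (m * m)), Hmc. field. lra. }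
  unfold G. rewrite HL. field. lra.
Qed.

Lemma is_y_xi_G (beta : nat -> R) (y : R) : xi beta 1 = 1 -> is_y_xi beta y ->
  G y = / xi' beta 1.
Proof. intros H1 [_ Hyeq]. unfold G. rewrite <- Hyeq, H1. unfold Rdiv. ring. Qed.

Lemma gt_2_of_G_eq_inv (y v : R) : 1 < y -> G y = / v -> 2 < v.
Proof.
  intros Hy HG.
  pose proof (G_pos y Hy) as Hpos. pose proof (G_lt_half y Hy) as Hhalf.
  rewrite HG in Hpos, Hhalf.
  assert (Hv : 0 < v).
  { destruct (Rtotal_order v 0) as [Hn | [Hz | Hp]]; [| | exact Hp].
    - pose proof (Rinv_lt_0_compat _ Hn). lra.
    - rewrite Hz, Rinv_0 in Hpos. lra. }
  rewrite <- (Rinv_inv v), <- (Rinv_inv 2).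
  apply Rinv_lt_contravar; [apply Rmult_lt_0_compat |]; lra.
Qed.

Lemma y_xi_mc (beta : nat -> R) (y m c : R) : is_y_xi beta y -> xi beta 1 = 1 ->
  is_mc beta m c -> y = (c + m) / c.
Proof.
  intros Hyxi H1 [Hm [Hc [Hmc1 Hmc2]]].
  apply G_inj; [apply Hyxi | |].
  - apply (Rmult_lt_reg_r c); [exact Hc |].
    unfold Rdiv. rewrite Rmult_assoc, Rinv_l; lra.
  - rewrite H1 in Hmc1.
    rewrite (is_y_xi_G beta y H1 Hyxi), Hmc2, G_mc by assumption. reflexivity.
Qed.

Definition ABA_ratio (v r : R) : R := ln r - (r - 1) * (r - 1 + v) / (r * v).

Lemma ABA_ratio_spec (v v2 : R) : 0 < v -> 0 < v2 -> ABA v v2 = ABA_ratio v (v2 / v).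
Proof.
  intros Hv Hv2. unfold ABA, ABA_ratio. f_equal. field. lra.
Qed.

Lemma ABA_ratio_1 (v : R) : 0 < v -> ABA_ratio v 1 = 0.
Proof. intros Hv. unfold ABA_ratio. rewrite ln_1. field. lra. Qed.

Lemma ABA_ratio_G_root (v y : R) : 0 < v -> 1 < y -> G y = / v -> ABA_ratio v y = 0.
Proof.
  intros Hv Hy HG. unfold ABA_ratio.
  replace ((y - 1) * (y - 1 + v) / (y * v)) with ((y - 1) ^ 2 * / v / y + (y - 1) / y)
    by (field; lra).
  rewrite <- HG, G_eq by assumption. field. lra.
Qed.

Definition ABA_ratio_deriv (v x : R) : R := (x - 1) * (v - 1 - x) / (x ^ 2 * v).

Lemma is_derive_ABA_ratio (v x : R) : 0 < v -> 0 < x ->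
  is_derive (ABA_ratio v) x (ABA_ratio_deriv v x).
Proof.
  intros Hv Hx. unfold ABA_ratio, ABA_ratio_deriv.
  auto_derive; [repeat split; try (intro; nra); lra |]. field. lra.
Qed.

Lemma ABA_ratio_pos (v r : R) : 2 < v -> 0 < r <= v - 1 -> r <> 1 -> 0 < ABA_ratio v r.
Proof.
  intros Hv Hr Hr1. rewrite <- (ABA_ratio_1 v) by lra.
  assert (Hw : forall x, 0 < x -> 0 < / (x ^ 2 * v))
    by (intros x Hx; apply Rinv_0_lt_compat, Rmult_lt_0_compat; [apply pow_lt |]; lra).
  destruct (Rlt_or_le r 1) as [Hlt | Hge].
  - apply (decreasing_of_derive_neg _ (ABA_ratio_deriv v) r 1); [lra | |].
    + intros x Hx. apply is_derive_ABA_ratio; lra.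
    + intros x Hx. unfold ABA_ratio_deriv. apply Rmult_neg_pos; [nra | apply Hw; lra].
  - apply (increasing_of_derive_pos _ (ABA_ratio_deriv v) 1 r); [lra | |].
    + intros x Hx. apply is_derive_ABA_ratio; lra.
    + intros x Hx. unfold ABA_ratio_deriv. apply Rmult_lt_0_compat; [nra | apply Hw; lra].
Qed.

Lemma ABA_ratio_decreasing (v a b : R) : 2 < v -> v - 1 <= a < b ->
  ABA_ratio v b < ABA_ratio v a.
Proof.
  intros Hv Hab.
  apply (decreasing_of_derive_neg _ (ABA_ratio_deriv v)); [lra | |].
  - intros x Hx. apply is_derive_ABA_ratio; lra.
  - intros x Hx. unfold ABA_ratio_deriv. apply Rmult_neg_pos; [nra |].
    apply Rinv_0_lt_compat, Rmult_lt_0_compat; [apply pow_lt |]; lra.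
Qed.

Lemma ABA_ratio_nonneg_iff (v y r : R) : 2 < v -> 1 < y -> ABA_ratio v y = 0 -> 0 < r ->
  (0 <= ABA_ratio v r <-> r <= y).
Proof.
  intros Hv Hy Hroot Hr.
  assert (Hyv : v - 1 < y).
  { destruct (Rlt_or_le (v - 1) y) as [| Hle]; [assumption |].
    pose proof (ABA_ratio_pos v y Hv ltac:(lra) ltac:(lra)). lra. }
  destruct (Req_dec r 1) as [-> | Hr1]; [rewrite ABA_ratio_1; lra |].
  destruct (Rle_or_lt r (v - 1)) as [Hrv | Hrv].
  - pose proof (ABA_ratio_pos v r Hv ltac:(lra) Hr1). lra.
  - split; intros H.
    + destruct (Rle_or_lt r y) as [| Hry]; [assumption |].
      pose proof (ABA_ratio_decreasing v y r Hv ltac:(lra)). lra.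
    + destruct (Req_dec r y) as [-> | Hry]; [lra |].
      pose proof (ABA_ratio_decreasing v r y Hv ltac:(lra)). lra.
Qed.

Section RIntBelow.

Variables (g : R -> R) (D : R).
Hypothesis g_cont : forall x, x < D -> continuous g x.

Lemma ex_RInt_below (a b : R) : a < D -> b < D -> ex_RInt g a b.
Proof.
  intros Ha Hb. apply (ex_RInt_continuous (V := R_CompleteNormedModule)).
  intros z Hz. apply g_cont.
  destruct (Rle_dec a b); [rewrite Rmax_right in Hz | rewrite Rmax_left in Hz]; lra.
Qed.

Lemma is_derive_RInt_upper (a s : R) : a < D -> s < D ->
  is_derive (fun s => RInt g a s) s (g s).
Proof.
  intros Ha Hs. apply (is_derive_RInt g _ a s); [| apply g_cont, Hs].
  apply (filter_imp (fun u => u < D)); [| apply (open_lt D), Hs].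
  intros u Hu. apply (RInt_correct (V := R_CompleteNormedModule)), ex_RInt_below; assumption.
Qed.

Lemma is_derive_RInt_lower (b t : R) : b < D -> t < D ->
  is_derive (fun t => RInt g t b) t (- g t).
Proof.
  intros Hb Ht. apply (is_derive_RInt' g _ t b); [| apply g_cont, Ht].
  apply (filter_imp (fun u => u < D)); [| apply (open_lt D), Ht].
  intros u Hu. apply (RInt_correct (V := R_CompleteNormedModule)), ex_RInt_below; assumption.
Qed.

End RIntBelow.

Lemma Derive_2_double_RInt (q : R -> R) (D K a b t : R) :
  (forall x, x < D -> continuous q x) -> a < D -> b < D -> t < D ->
  Derive_n (fun t => K - RInt (fun s => RInt q a s) t b) 2 t = q t.
Proof.
  intros Hq Ha Hb Ht.
  set (F := fun s => RInt q a s).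
  assert (HF : forall s, s < D -> is_derive F s (q s))
    by (intros; apply (is_derive_RInt_upper q D); auto).
  assert (HFcont : forall s, s < D -> continuous F s)
    by (intros s Hs; apply (ex_derive_continuous (V := R_NormedModule)); eexists; apply HF, Hs).
  assert (Hd : forall u, u < D -> Derive (fun t => K - RInt F t b) u = F u).
  { intros u Hu. apply is_derive_unique.
    replace (F u) with (0 - - F u) by ring.
    apply (is_derive_minus (fun _ => K)); [apply (is_derive_const (V := R_NormedModule)) |].
    apply (is_derive_RInt_lower F D); assumption. }
  change (Derive (Derive (fun t => K - RInt F t b)) t = q t).
  rewrite (Derive_ext_loc _ F).
  - apply is_derive_unique, HF, Ht.
  - apply (filter_imp (fun u => u < D)); [| apply (open_lt D), Ht].
    exact Hd.
Qed.

Lemma phi_pos (m c t : R) : 0 < m -> t < 1 + c / m -> 0 < phi m c t.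
Proof.
  intros Hm Ht. unfold phi.
  apply (Rmult_lt_compat_l m) in Ht; [| assumption].
  replace (m * (1 + c / m)) with (m + c) in Ht by (field; lra). lra.
Qed.

Lemma replicon_eq (beta : nat -> R) (m c : R) : 0 < m -> 0 < c ->
  replicon beta m c = / (m + c) ^ 2 - xi'' beta 0.
Proof.
  intros Hm Hc. unfold replicon, eta.
  assert (HD : 1 < 1 + c / m) by (assert (0 < c / m) by (apply Rdiv_lt_0_compat; lra); lra).
  rewrite (Derive_2_double_RInt _ (1 + c / m)); [| | lra | lra | lra].
  - unfold phi. do 3 f_equal. ring.
  - intros x Hx. apply (ex_derive_continuous (V := R_NormedModule)).
    pose proof (phi_pos m c x Hm Hx) as Hphi. unfold phi in *. auto_derive. nra.
Qed.

Lemma replicon_nonneg_iff (m c d : R) : 0 < m -> 0 < c -> 0 <= d ->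
  (0 <= / (m + c) ^ 2 - d <-> d = 0 \/ (c + m) / c <= / (c * (c + m)) / d).
Proof.
  intros Hm Hc Hd.
  destruct (Req_dec d 0) as [-> | Hd0].
  - split; [now left | intros _].
    assert (0 < / (m + c) ^ 2) by (apply Rinv_0_lt_compat, pow_lt; lra). lra.
  - assert (E : / (c * (c + m)) / d - (c + m) / c = (/ (m + c) ^ 2 - d) * ((c + m) / (c * d)))
      by (field; lra).
    assert (Hk : 0 < (c + m) / (c * d)) by (apply Rdiv_lt_0_compat; nra).
    split; intros H.
    + right. nra.
    + destruct H as [H | H]; [lra | nra].
Qed.

Lemma Series_ge_term (a : nat -> R) (N : nat) :
  (forall n, 0 <= a n) -> ex_series a -> a N <= Series a.
Proof.
  intros Ha Hex.
  rewrite (Series_incr_n a (S N)) by (lia || assumption).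
  assert (Htail : 0 <= Series (fun k => a (S N + k)%nat)).
  { assert (Hzero : Series (fun _ : nat => 0) = 0).
    { transitivity (0 * Series (fun _ : nat => 0)); [| ring].
      rewrite <- Series_scal_l. apply Series_ext. intros; ring. }
    rewrite <- Hzero. apply Series_le.
    - intros n. split; [lra | apply Ha].
    - apply ex_series_incr_n, Hex. }
  assert (a N <= sum_f_R0 a N).
  { destruct N as [| N]; simpl; [lra |].
    pose proof (cond_pos_sum a N Ha). lra. }
  change (Init.Nat.pred (S N)) with N. lra.
Qed.

Lemma PSeries_ge_term (a : nat -> R) (x : R) (N : nat) :
  0 <= x -> (forall n, 0 <= a n) -> ex_pseries a x -> a N * x ^ N <= PSeries a x.
Proof.
  intros Hx Ha Hex.
  assert (E : PSeries a x = Series (fun n => a n * x ^ n)).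
  { rewrite PSeries_eq. apply Series_ext. intros n.
    rewrite pow_n_pow. apply Rmult_comm. }
  rewrite E. apply (Series_ge_term (fun n => a n * x ^ n)).
  - intros n. apply Rmult_le_pos; [apply Ha | apply pow_le, Hx].
  - apply ex_pseries_R, Hex.
Qed.

Lemma CV_radius_ge_of_nonneg (a : nat -> R) (x : R) :
  0 <= x -> (forall n, 0 <= a n) -> ex_pseries a x -> Rbar_le x (CV_radius a).
Proof.
  intros Hx Ha Hex.
  apply (proj1 (CV_radius_bounded a)).
  exists (PSeries a x). intros n.
  rewrite Rabs_right by (apply Rle_ge, Rmult_le_pos; [apply Ha | apply pow_le, Hx]).
  apply PSeries_ge_term; assumption.
Qed.

Lemma coef_nonneg (beta : nat -> R) (n : nat) : 0 <= coef beta n.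
Proof. unfold coef. destruct (Nat.ltb n 2); [lra | apply pow2_ge_0]. Qed.

Lemma CV_radius_model (beta : nat -> R) : is_model beta -> Rbar_lt 1 (CV_radius (coef beta)).
Proof.
  intros [_ [eps [Heps Hex]]].
  pose proof (CV_radius_ge_of_nonneg (coef beta) (1 + eps) ltac:(lra) (coef_nonneg beta) Hex)
    as H.
  destruct (CV_radius (coef beta)) as [r | |]; simpl in *; [lra | trivial | contradiction].
Qed.

Lemma xi''_0 (beta : nat -> R) : is_model beta -> xi'' beta 0 = 2 * beta 2%nat ^ 2.
Proof.
  intros Hmod. unfold xi'', xi. rewrite Derive_n_coef.
  - unfold coef. simpl. ring.
  - apply (Rbar_lt_trans 0 1); [simpl; lra | apply CV_radius_model, Hmod].
Qed.

Lemma xi''_1_pos (beta : nat -> R) : is_model beta -> 0 < xi'' beta 1.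
Proof.
  intros Hmod. pose proof (CV_radius_model beta Hmod) as Hr.
  destruct Hmod as [[p [Hp Hbp]] _].
  rewrite <- Rabs_R1 in Hr.
  unfold xi'', xi. rewrite Derive_n_PSeries by exact Hr.
  apply Rlt_le_trans with (PS_derive_n 2 (coef beta) (p - 2)%nat * 1 ^ (p - 2)).
  - rewrite pow1, Rmult_1_r. unfold PS_derive_n.
    replace (p - 2 + 2)%nat with p by lia.
    apply Rmult_lt_0_compat; [apply Rdiv_lt_0_compat; apply INR_fact_lt_0 |].
    unfold coef. replace (Nat.ltb p 2) with false by (symmetry; apply Nat.ltb_ge; lia).
    apply pow2_gt_0, Hbp.
  - apply PSeries_ge_term; [lra | |].
    + intros k. unfold PS_derive_n.
      apply Rmult_le_pos; [| apply coef_nonneg].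
      left. apply Rdiv_lt_0_compat; apply INR_fact_lt_0.
    + apply CV_radius_inside. rewrite CV_radius_derive_n. exact Hr.
Qed.

Theorem lemma5p6 (beta : nat -> R) (y m c : R) :
  is_model beta ->
  xi beta 1 = 1 ->
  ~ is_pure_quadratic beta ->
  is_y_xi beta y ->
  is_mc beta m c ->
  ((0 <= replicon beta m c /\ (pure_like beta \/ critical beta)) <->
   (xi'' beta 1 / xi' beta 1 <= y /\
    (xi'' beta 0 = 0 \/ y <= xi' beta 1 / xi'' beta 0))).
Proof.
  (* [~ is_pure_quadratic beta] only guarantees that y_xi exists; here y is given. *)
  intros Hmod H1 _ Hyxi Hmc.
  pose proof (is_y_xi_G beta y H1 Hyxi) as HG.
  pose proof (gt_2_of_G_eq_inv y _ (proj1 Hyxi) HG) as Hv.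
  pose proof (xi''_1_pos beta Hmod) as Hv2.
  pose proof (y_xi_mc beta y m c Hyxi H1 Hmc) as Hy_mc.
  destruct Hyxi as [Hy _], Hmc as [Hm [Hc [_ Hmc2]]].
  assert (Hd0 : 0 <= xi'' beta 0) by (rewrite xi''_0 by exact Hmod; nra).
  assert (Hv_mc : xi' beta 1 = / (c * (c + m))) by (rewrite <- Hmc2; field; lra).
  assert (Hrep : 0 <= replicon beta m c <-> xi'' beta 0 = 0 \/ y <= xi' beta 1 / xi'' beta 0)
    by (rewrite replicon_eq, Hy_mc, Hv_mc by assumption; apply replicon_nonneg_iff; assumption).
  assert (HABA : 0 <= ABA (xi' beta 1) (xi'' beta 1) <-> xi'' beta 1 / xi' beta 1 <= y).
  { rewrite ABA_ratio_spec by lra.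
    apply ABA_ratio_nonneg_iff; [exact Hv | exact Hy | apply ABA_ratio_G_root; auto; lra |].
    apply Rdiv_lt_0_compat; lra. }
  unfold pure_like, critical. rewrite Hrep, <- HABA.
  split; intros [Hr Ha]; split; try assumption; lra.
Qed.
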